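(* For every $(\overline{u}_{T,k+1/2})_{k=1}^4\in\mathbb{R}^4$ and every saturations $S_1,\dots,S_4$, the interfacial mobility ratios $\overline{\boldsymbol{\chi}}_\ell=\boldsymbol{A}^{-1}\boldsymbol{B}\boldsymbol{\chi}_\ell$ are well defined, and for every $k\in\{1,\dots,4\}$, $$\overline{V}_{w,k+1/2}+\overline{V}_{\textit{nw},k+1/2}=\overline{u}_{T,k+1/2}.$$
   Context: Indices in $\{1,2,3,4\}$ are cyclic mod 4. Two phases $w,\textit{nw}$ with mobilities $\lambda_w,\lambda_{\textit{nw}}\ge0$ (functions of the wetting saturation $S$) with $\lambda_T=\lambda_w+\lambda_{\textit{nw}}>0$; $\chi_{\ell,k}=\lambda_\ell(S_k)/\lambda_T(S_k)$ and $\boldsymbol{\chi}_\ell=(\chi_{\ell,1},\dots,\chi_{\ell,4})^T$. Limiter $\varphi(r)=\dfrac{r^4+r^3+r^2+r}{r^4+r^3+r^2+r+1}$, $r\ge0$. $\overline{\omega}^V_{k+1/2}=\varphi(\max(0,\overline{u}_{T,k-1/2}/\overline{u}_{T,k+1/2}))$ if $\overline{u}_{T,k+1/2}>0$, $=\varphi(\max(0,\overline{u}_{T,k+3/2}/\overline{u}_{T,k+1/2}))$ if $\overline{u}_{T,k+1/2}<0$, $=0$ otherwise. $\boldsymbol{A}$: $a_{kk}=1$, $a_{k,k-1}=-\overline{\omega}^V_{k+1/2}$ if $\overline{u}_{T,k+1/2}\ge0$ (else $0$), $a_{k,k+1}=-\overline{\omega}^V_{k+1/2}$ if $\overline{u}_{T,k+1/2}<0$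 (else $0$), other entries $0$. $\boldsymbol{B}$: $b_{kk}=1-\overline{\omega}^V_{k+1/2}$ if $\overline{u}_{T,k+1/2}\ge0$ (else $0$), $b_{k,k+1}=1-\overline{\omega}^V_{k+1/2}$ if $\overline{u}_{T,k+1/2}<0$ (else $0$), other entries $0$. $\overline{\chi}_{\ell,k+1/2}$ is the $k$-th entry of $\overline{\boldsymbol{\chi}}_\ell$, and the viscous flux is $\overline{V}_{\ell,k+1/2}=\overline{\chi}_{\ell,k+1/2}\overline{u}_{T,k+1/2}$. *)

(* the statement is purely algebraic/order-theoretic, so it is
   stated over an arbitrary real field R (which includes the reals). *)
From HB Require Import structures.
From mathcomp Require Import all_boot all_order all_algebra.
Set Implicit Arguments. Unset Strict Implicit. Unset Printing Implicit Defensive.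
Import Order.TTheory GRing.Theory Num.Theory.
Local Open Scope ring_scope.

(* Cells/interfaces are indexed by 'I_4; index k : 'I_4 stands for cell k+1
   and interface k+1/2 (i.e. between cells k+1 and k+2, 1-based).
   Cyclic neighbours: ord_pred k = k-1 mod 4, ordS k = k+1 mod 4. *)

Definition phi (R : realFieldType) (r : R) : R :=
  (r ^+ 4 + r ^+ 3 + r ^+ 2 + r) / (r ^+ 4 + r ^+ 3 + r ^+ 2 + r + 1).

(* omegabar^V_{k+1/2}, with u k = ubar_{T,k+1/2}. *)
Definition omegaV (R : realFieldType) (u : 'I_4 -> R) (k : 'I_4) : R :=
  if 0 < u k then phi (Num.max 0 (u (ord_pred k) / u k))
  else if u k < 0 then phi (Num.max 0 (u (ordS k) / u k))
  else 0.

Definition matA (R : realFieldType) (u : 'I_4 -> R) : 'M[R]_4 :=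
  \matrix_(i, j)
    (if j == i then 1
     else if (j == ord_pred i) && (0 <= u i) then - omegaV u i
     else if (j == ordS i) && (u i < 0) then - omegaV u i
     else 0).

Definition matB (R : realFieldType) (u : 'I_4 -> R) : 'M[R]_4 :=
  \matrix_(i, j)
    (if (j == i) && (0 <= u i) then 1 - omegaV u i
     else if (j == ordS i) && (u i < 0) then 1 - omegaV u i
     else 0).

Definition chi (R : realFieldType) (lam lamw lamnw : R -> R) (S : 'I_4 -> R)
  : 'cV[R]_4 :=
  \col_k (lam (S k) / (lamw (S k) + lamnw (S k))).

Definition chibar (R : realFieldType) (u : 'I_4 -> R) (chil : 'cV[R]_4)
  : 'cV[R]_4 :=
  invmx (matA u) *m (matB u *m chil).

Definition Vbar (R : realFieldType) (u : 'I_4 -> R) (chil : 'cV[R]_4)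
  (k : 'I_4) : R :=
  chibar u chil k ord0 * u k.

From HB Require Import structures.
From mathcomp Require Import all_boot all_order all_algebra.
From mathcomp Require Import lra.
Import Order.TTheory GRing.Theory Num.Theory.
Local Open Scope ring_scope.

(* Every row i of A has a 1 on the diagonal and a single
   off-diagonal entry -omega_i in the upwind column upwind(i) (the predecessor
   if u_i >= 0, the successor otherwise), and B has the single entry
   1 - omega_i in the column i or ordS i, respectively.  Since the limiter
   satisfies 0 <= phi < 1, every omega_i lies in [0,1), hence A x = 0 forces
   x_i = omega_i x_upwind(i), and looking at a coordinate of maximal modulus
   gives x = 0: A is invertible.  Moreover every row of A and of B sums to
   1 - omega_i, i.e. B 1 = A 1, so A^{-1} B fixes the constant vector 1.
   Since chi_w + chi_nw = 1 componentwise and chibar is linear in chi, the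
   interfacial ratios chibar_w + chibar_nw = 1, and multiplying by u_k gives
   the flux identity.  The file first proves the bounds on the limiter, the
   general "contraction kernel" fact and a kernel criterion for invertibility,
   then the action of A and B on vectors, and finally the theorem. *)

Lemma unitmx_of_inj_mulmx (F : fieldType) n (A : 'M[F]_n) :
  (forall x : 'cV_n, A *m x = 0 -> x = 0) -> A \in unitmx.
Proof.
move=> injA; rewrite -unitmx_tr -row_free_unit; apply: inj_row_free => v vA0.
apply: trmx_inj; rewrite trmx0; apply: injA.
by rewrite -(trmxK A) -trmx_mul vA0 trmx0.
Qed.

(* If each coordinate of x is a factor in [0,1) times some coordinate of x,
   then x = 0: compare a coordinate of maximal modulus with itself. *)
Lemma contraction_fixpoint_eq0 {R : realFieldType} {n : nat}
    {w : 'I_n.+1 -> R} {f : 'I_n.+1 -> 'I_n.+1} {x : 'cV[R]_n.+1} :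
  (forall i, 0 <= w i < 1) -> (forall i, x i 0 = w i * x (f i) 0) -> x = 0.
Proof.
move=> w01 xE.
have [m _ maxm] := @arg_maxP _ _ _ ord0 xpredT (fun i => `|x i 0|) isT.
have xm0 : `|x m 0| = 0.
  have /andP [w0 w1] := w01 m.
  have : `|x m 0| <= w m * `|x m 0|.
    rewrite {1}xE normrM ger0_norm // ler_wpM2l //; exact: maxm.
  have := normr_ge0 (x m 0); nra.
apply/matrixP => i j; rewrite (ord1 j) mxE; apply/eqP.
rewrite -normr_eq0 eq_le normr_ge0 andbT -xm0; exact: maxm.
Qed.

Section UpwindMatrices.
Variable R : realFieldType.
Implicit Types (u : 'I_4 -> R) (x : 'cV[R]_4).

Lemma phi_range (r : R) : 0 <= r -> 0 <= phi r < 1.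
Proof.
move=> r0; rewrite /phi; set p := _ + r.
have p0 : 0 <= p by rewrite /p !addr_ge0 // exprn_ge0.
have p1 : 0 < p + 1 by rewrite ltr_wpDl.
by rewrite divr_ge0 ?(ltW p1) //= ltr_pdivrMr // mul1r ltrDl.
Qed.

Lemma omegaV_range u i : 0 <= omegaV u i < 1.
Proof.
rewrite /omegaV; case: ifP => _; first by apply: phi_range; rewrite le_max lexx.
case: ifP => _; first by apply: phi_range; rewrite le_max lexx.
by rewrite lexx ltr01.
Qed.

(* The upwind neighbour of interface i, i.e. the column of the off-diagonal
   entry of row i of A. *)
Definition upwind u (i : 'I_4) : 'I_4 := if 0 <= u i then ord_pred i else ordS i.

Lemma upwind_neq u i : upwind u i != i.
Proof. by rewrite /upwind; case: ifP; case: i => [[|[|[|[|?]]]] ?]. Qed.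

Lemma matA_mulE u x i :
  (matA u *m x) i 0 = x i 0 - omegaV u i * x (upwind u i) 0.
Proof.
have nb_i := upwind_neq u i.
rewrite !mxE (bigD1 i) //= (bigD1 (upwind u i)) //= big1 ?addr0.
  rewrite !mxE eqxx mul1r (negbTE nb_i) /upwind.
  by case: (leP 0 (u i)) => _; rewrite eqxx ?andbF mulNr.
move=> j /andP [ji jnb]; rewrite mxE (negbTE ji).
by move: jnb; rewrite /upwind; case: (leP 0 (u i)) => _ /negbTE ->;
  rewrite ?andbF mul0r.
Qed.

Lemma matB_mul1 u i : (matB u *m (const_mx 1 : 'cV_4)) i 0 = 1 - omegaV u i.
Proof.
have Si : ordS i != i by case: i => [[|[|[|[|?]]]] ?].
rewrite !mxE; case ui: (0 <= u i).
  rewrite (bigD1 i) //= big1 ?addr0; first by rewrite !mxE eqxx ui mulr1.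
  by move=> j ji; rewrite !mxE (negbTE ji) ltNge ui andbF mul0r.
rewrite (bigD1 (ordS i)) //= big1 ?addr0.
  by rewrite !mxE eqxx (negbTE Si) ltNge ui mulr1.
by move=> j ji; rewrite !mxE (negbTE ji) ui !andbF mul0r.
Qed.

Lemma matA_unit u : matA u \in unitmx.
Proof.
apply: unitmx_of_inj_mulmx => x Ax0.
apply: (contraction_fixpoint_eq0 (f := upwind u) (omegaV_range u)) => i.
by apply/eqP; rewrite -subr_eq0 -matA_mulE Ax0 mxE.
Qed.

Lemma chibar_const1 u : chibar u (const_mx 1) = const_mx 1.
Proof.
have BA : matB u *m const_mx 1 = matA u *m (const_mx 1 : 'cV_4).
  by apply/matrixP => i j; rewrite (ord1 j) matB_mul1 matA_mulE !mxE mulr1.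
by rewrite /chibar BA mulKmx // matA_unit.
Qed.

End UpwindMatrices.

Lemma chi_sum (R : realFieldType) (lamw lamnw : R -> R) (S : 'I_4 -> R) :
  (forall s, 0 < lamw s + lamnw s) ->
  chi lamw lamw lamnw S + chi lamnw lamw lamnw S = const_mx 1.
Proof.
by move=> hT; apply/matrixP => i j; rewrite !mxE -mulrDl divff // lt0r_neq0.
Qed.

Theorem mainTheorem3 (R : realFieldType) (lamw lamnw : R -> R)
  (hw : forall s, 0 <= lamw s) (hnw : forall s, 0 <= lamnw s)
  (hT : forall s, 0 < lamw s + lamnw s)
  (u : 'I_4 -> R) (S : 'I_4 -> R) :
  matA u \in unitmx /\
  (forall k : 'I_4,
     Vbar u (chi lamw lamw lamnw S) k + Vbar u (chi lamnw lamw lamnw S) k = u k).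
Proof.
split=> [|k]; first exact: matA_unit.
have chibar_sum : chibar u (chi lamw lamw lamnw S) + chibar u (chi lamnw lamw lamnw S)
    = const_mx 1.
  by rewrite /chibar -mulmxDr -mulmxDr chi_sum // -/(chibar u _) chibar_const1.
move/matrixP/(_ k ord0): chibar_sum; rewrite [LHS]mxE [RHS]mxE => chibar_sum_k.
by rewrite /Vbar -mulrDl chibar_sum_k mul1r.
Qed.
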